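(* Let $N\geq 1$ and let $U\in M_{2N}(\mathbb{C})$ be a unitary matrix that is antisymmetric, i.e. $U^{\rm T}=-U$. Define the linear map $\Phi^U_{4N}:M_{4N}(\mathbb{C})\to M_{4N}(\mathbb{C})$ as follows: writing $X\in M_{4N}(\mathbb{C})$ in block form $X=\begin{pmatrix} X_{11} & X_{12}\\ X_{21} & X_{22}\end{pmatrix}$ with $X_{kl}\in M_{2N}(\mathbb{C})$, $$\Phi^U_{4N}(X)=\frac{1}{2N}\begin{pmatrix} \mathbb{I}_{2N}\,\mathrm{Tr}X_{22} & -\big(X_{12}+UX_{21}^{\rm T}U^\dagger\big)\\ -\big(X_{21}+UX_{12}^{\rm T}U^\dagger\big) & \mathbb{I}_{2N}\,\mathrm{Tr}X_{11}\end{pmatrix}.$$ Then $\Phi^U_{4N}$ is a positive map, i.e. $\Phi^U_{4N}(X)\geq 0$ for every positive semidefinite $X\in M_{4N}(\mathbb{C})$.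
   Context: $X^{\rm T}$ denotes the transpose, $U^\dagger$ the conjugate transpose, and $\mathbb{I}_{2N}$ the $2N\times 2N$ identity matrix. *)

From mathcomp Require Import all_boot all_order all_algebra.
From mathcomp Require Import sesquilinear spectral.
Set Implicit Arguments. Unset Strict Implicit. Unset Printing Implicit Defensive.
Import Order.TTheory GRing.Theory Num.Theory.
Local Open Scope ring_scope.
Local Open Scope sesquilinear_scope.

(* Complex numbers are modelled by an arbitrary numClosedFieldType C
   (e.g. 'complex R' for a real closed field R); M ^t* is the conjugate
   transpose (dagger). *)

Definition psdmx (C : numClosedFieldType) (n : nat) (A : 'M[C]_n) : Prop :=
  A ^t* = A /\ forall v : 'cV[C]_n, 0 <= (v ^t* *m A *m v) 0 0.

Definition PhiU (C : numClosedFieldType) (N : nat) (U : 'M[C]_(2 * N))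
  (X : 'M[C]_(2 * N + 2 * N)) : 'M[C]_(2 * N + 2 * N) :=
  let X11 := ulsubmx X in let X12 := ursubmx X in
  let X21 := dlsubmx X in let X22 := drsubmx X in
  ((2 * N)%:R)^-1 *:
    block_mx ((\tr X22)%:M) (- (X12 + U *m X21^T *m U^t*))
             (- (X21 + U *m X12^T *m U^t*)) ((\tr X11)%:M).

From mathcomp Require Import all_boot all_order all_algebra.
From mathcomp Require Import sesquilinear spectral.
From mathcomp Require Import ring.
Import Order.TTheory GRing.Theory Num.Theory Num.Def.
Local Open Scope ring_scope.
Local Open Scope sesquilinear_scope.
Set Implicit Arguments. Unset Strict Implicit.

(* Write X = [[A, B], [B^*, D]] and test Phi(X) against v = (x, y).  Since U is
   antisymmetric and unitary, x' := U conj(x) is orthogonal to x and has the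
   same norm, and likewise y' := U conj(y); moreover the twisted cross terms
   x^* U B^T U^* y equal the plain ones y'^* B^* x'.  Bessel's inequality for
   the pair (x, x') bounds x^* A x + x'^* A x' by |x|^2 Tr A, and positivity of
   X at (|y|^2 x, -|x|^2 y) and (|y|^2 x', -|x|^2 y') controls the cross
   terms; adding these four inequalities gives |x|^2 |y|^2 v^* Phi(X) v >= 0. *)

Lemma mx11_trmx (T : Type) (A : 'M[T]_1) : A^T = A.
Proof. by apply/matrixP => i j; rewrite !ord1 mxE. Qed.

Section MatrixForms.
Variable C : numClosedFieldType.

Lemma trmxC_mul m n p (A : 'M[C]_(m, n)) (B : 'M[C]_(n, p)) :
  (A *m B)^t* = B^t* *m A^t*.
Proof. by rewrite trmx_mul map_mxM. Qed.

Lemma trmxC_scalar n (a : C) : (a%:M : 'M[C]_n)^t* = (a^*)%:M.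
Proof. by rewrite tr_scalar_mx map_scalar_mx. Qed.

Lemma trmxC_conj m n (A : 'M[C]_(m, n)) : (map_mx conjC A)^t* = A^T.
Proof. by rewrite map_trmx map_mxCK. Qed.

Definition sqnorm n (x : 'cV[C]_n) : C := (x^t* *m x) 0 0.

Definition mxform n m (u : 'cV[C]_n) (M : 'M[C]_(n, m)) (v : 'cV[C]_m) : C :=
  (u^t* *m M *m v) 0 0.

Lemma sqnormE n (x : 'cV[C]_n) : sqnorm x = \sum_(i < n) `|x i 0| ^+ 2.
Proof. by rewrite /sqnorm mxE; apply: eq_bigr => i _; rewrite !mxE normCK mulrC. Qed.

Lemma sqnorm_ge0 n (x : 'cV[C]_n) : 0 <= sqnorm x.
Proof. by rewrite sqnormE; apply: sumr_ge0 => i _; rewrite exprn_ge0. Qed.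

Lemma sqnorm_gt0 n (x : 'cV[C]_n) : x != 0 -> 0 < sqnorm x.
Proof.
move=> xn0; rewrite lt_def sqnorm_ge0 andbT; apply: contra xn0.
rewrite sqnormE psumr_eq0 => [/allP x0|i _]; last exact: exprn_ge0.
apply/eqP/matrixP => i j; rewrite (ord1 j) mxE.
by have /implyP := x0 i (mem_index_enum i); rewrite expf_eq0 normr_eq0 => /(_ isT)/eqP.
Qed.

Lemma sqnorm0 n : sqnorm (0 : 'cV[C]_n) = 0.
Proof. by rewrite /sqnorm mulmx0 mxE. Qed.

Lemma mxform0l n m (M : 'M[C]_(n, m)) v : mxform 0 M v = 0.
Proof. by rewrite /mxform linear0 map_mx0 !mul0mx mxE. Qed.

Lemma mxform0r n m (u : 'cV[C]_n) (M : 'M[C]_(n, m)) : mxform u M 0 = 0.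
Proof. by rewrite /mxform mulmx0 mxE. Qed.

Lemma mxformD n m (u : 'cV[C]_n) (M1 M2 : 'M[C]_(n, m)) v :
  mxform u (M1 + M2) v = mxform u M1 v + mxform u M2 v.
Proof. by rewrite /mxform mulmxDr mulmxDl mxE. Qed.

Lemma mxformN n m (u : 'cV[C]_n) (M : 'M[C]_(n, m)) v :
  mxform u (- M) v = - mxform u M v.
Proof. by rewrite /mxform mulmxN mulNmx mxE. Qed.

Lemma mxformZ n m (u : 'cV[C]_n) a (M : 'M[C]_(n, m)) v :
  mxform u (a *: M) v = a * mxform u M v.
Proof. by rewrite /mxform -scalemxAr -scalemxAl mxE. Qed.

Lemma mxform_scalar n (x : 'cV[C]_n) a : mxform x a%:M x = a * sqnorm x.
Proof. by rewrite /mxform mul_mx_scalar -scalemxAl mxE. Qed.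

Lemma mxform_col_mx n (X : 'M[C]_(n + n)) (p q : 'cV[C]_n) :
  mxform (col_mx p q) X (col_mx p q) =
  mxform p (ulsubmx X) p + mxform p (ursubmx X) q +
  mxform q (dlsubmx X) p + mxform q (drsubmx X) q.
Proof.
rewrite /mxform -[X in LHS]submxK tr_col_mx map_row_mx mul_row_block.
by rewrite mul_row_col !mulmxDl !mxE addrACA !addrA.
Qed.

End MatrixForms.

Section PositiveSemidefinite.
Variable C : numClosedFieldType.

Lemma mxform_psd n (Y : 'M[C]_n) (v : 'cV[C]_n) : psdmx Y -> 0 <= mxform v Y v.
Proof. by case=> _; apply. Qed.

Lemma psdmx_trace_conj n (Y : 'M[C]_n) m (P : 'M[C]_(n, m)) :
  psdmx Y -> 0 <= \tr (P^t* *m Y *m P).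
Proof.
move=> Ypsd; apply: sumr_ge0 => j _.
have -> : (P^t* *m Y *m P) j j = mxform (col j P) Y (col j P).
  by rewrite /mxform tr_col map_row -!row_mul colE mulmxA -colE !mxE.
exact: mxform_psd.
Qed.

Lemma psdmx_tr_ge0 n (Y : 'M[C]_n) : psdmx Y -> 0 <= \tr Y.
Proof.
by move/(psdmx_trace_conj 1%:M); rewrite trmxC_scalar conjC1 mul1mx mulmx1.
Qed.

(* Test Y against P := s - u1 u1^* - u2 u2^*, which satisfies P P^* = s P. *)
Lemma psdmx_orthogonal_pair n (Y : 'M[C]_n) (u1 u2 : 'cV[C]_n) (s : C) :
  psdmx Y -> 0 < s ->
  u1^t* *m u1 = s%:M -> u2^t* *m u2 = s%:M ->
  u1^t* *m u2 = 0 -> u2^t* *m u1 = 0 ->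
  mxform u1 Y u1 + mxform u2 Y u2 <= s * \tr Y.
Proof.
move=> Ypsd s_gt0 h11 h22 h12 h21.
set S1 := u1 *m u1^t*; set S2 := u2 *m u2^t*; set P := s%:M - S1 - S2.
have herm_outer (u : 'cV[C]_n) : (u *m u^t*)^t* = u *m u^t* by rewrite trmxC_mul trmxCK.
have P_herm : P^t* = P.
  by rewrite /P !(linearB, map_mxB) /= trmxC_scalar geC0_conj ?ltW ?herm_outer.
have outer_mul (u v : 'cV[C]_n) : (u *m u^t*) *m (v *m v^t*) = u *m (u^t* *m v) *m v^t*.
  by rewrite !mulmxA.
have PP : P *m P^t* = s *: P.
  rewrite P_herm /P !mulmxBl !mulmxBr !outer_mul h11 h22 h12 h21.
  rewrite !mul_mx_scalar !mulmx0 !mul0mx -!scalemxAl !mul_scalar_mx.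
  by apply/matrixP => i j; rewrite !mxE; ring.
have := psdmx_trace_conj P Ypsd.
rewrite mxtrace_mulC mulmxA PP -scalemxAl mxtraceZ pmulr_rge0 //.
rewrite /P !mulmxBl !linearB /= mul_scalar_mx mxtraceZ /S1 /S2 -!mulmxA.
rewrite !(mxtrace_mulC u1) !(mxtrace_mulC u2) !trace_mx11.
by rewrite subr_ge0 lerBrDr addrC.
Qed.

Lemma hermitian_submx n (X : 'M[C]_(n + n)) : X^t* = X ->
  [/\ (ulsubmx X)^t* = ulsubmx X, (drsubmx X)^t* = drsubmx X
     & dlsubmx X = (ursubmx X)^t*].
Proof.
move=> X_herm.
have : block_mx ((ulsubmx X)^t*) ((dlsubmx X)^t*) ((ursubmx X)^t*) ((drsubmx X)^t*)
       = block_mx (ulsubmx X) (ursubmx X) (dlsubmx X) (drsubmx X).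
  by rewrite -map_block_mx -tr_block_mx submxK X_herm.
by case/eq_block_mx.
Qed.

Lemma psdmx_ulsubmx n (X : 'M[C]_(n + n)) : psdmx X -> psdmx (ulsubmx X).
Proof.
move=> Xpsd; split; first by case: (hermitian_submx Xpsd.1).
move=> v; have := mxform_psd (col_mx v 0) Xpsd.
by rewrite mxform_col_mx !(mxform0l, mxform0r) !addr0.
Qed.

Lemma psdmx_drsubmx n (X : 'M[C]_(n + n)) : psdmx X -> psdmx (drsubmx X).
Proof.
move=> Xpsd; split; first by case: (hermitian_submx Xpsd.1).
move=> v; have := mxform_psd (col_mx 0 v) Xpsd.
by rewrite mxform_col_mx !(mxform0l, mxform0r) !add0r.
Qed.

Lemma psdmx_col_mx_real_comb n (X : 'M[C]_(n + n)) (p q : 'cV[C]_n) (a b : C) :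
  psdmx X -> a^* = a -> b^* = b ->
  0 <= a ^+ 2 * mxform p (ulsubmx X) p
       + a * b * (mxform p (ursubmx X) q + mxform q (dlsubmx X) p)
       + b ^+ 2 * mxform q (drsubmx X) q.
Proof.
move=> Xpsd a_real b_real; have := mxform_psd (col_mx (a *: p) (b *: q)) Xpsd.
rewrite mxform_col_mx /mxform !(linearZ, map_mxZ) /= a_real b_real.
rewrite -!scalemxAl !scalerA !mxE => /le_trans; apply.
by rewrite le_eqVlt; apply/predU1P; left; ring.
Qed.

End PositiveSemidefinite.

Lemma antisym_quadratic_eq0 (R : numDomainType) n (K : 'M[R]_n) (w : 'cV[R]_n) :
  K^T = - K -> w^T *m K *m w = 0.
Proof.
move=> K_anti; set M := w^T *m K *m w.
have M_anti : M = - M.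
  by rewrite -{1}[M]mx11_trmx /M !trmx_mul trmxK K_anti mulNmx mulmxN mulmxA.
have /eqP : M 0 0 = - M 0 0 by rewrite {1}M_anti mxE.
rewrite -subr_eq0 opprK -mulr2n mulrn_eq0 /= => /eqP M00.
by rewrite [M]mx11_scalar M00 raddf0.
Qed.

Section AntisymmetricUnitary.
Variables (C : numClosedFieldType) (n : nat) (U : 'M[C]_n).
Hypothesis U_anti : U^T = - U.

Local Notation conj_mx := (map_mx conjC).

Lemma trmxC_antisym : U^t* = - conj_mx U.
Proof. by rewrite U_anti map_mxN. Qed.

Lemma antisym_conj_orthogonal (x : 'cV[C]_n) : x^t* *m (U *m conj_mx x) = 0.
Proof. by rewrite -map_trmx mulmxA antisym_quadratic_eq0. Qed.

Lemma antisym_conj_orthogonalC (x : 'cV[C]_n) : (U *m conj_mx x)^t* *m x = 0.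
Proof.
by rewrite -[x in _ *m x]trmxCK -trmxC_mul antisym_conj_orthogonal trmx0 map_mx0.
Qed.

Lemma mxform_antisym_swap (Z : 'M[C]_n) (x y : 'cV[C]_n) :
  mxform x (U *m Z^T *m U^t*) y = mxform (U *m conj_mx y) Z (U *m conj_mx x).
Proof.
rewrite /mxform -[x^t* *m _ *m y]mx11_trmx !trmxC_mul !trmx_mul trmxC_conj.
by rewrite !map_trmx !trmxK U_anti map_mxN !(mulmxN, mulNmx) !mulmxA.
Qed.

Hypothesis U_unitary : U \is unitarymx.

Lemma unitary_conj_sqnorm (x : 'cV[C]_n) :
  (U *m conj_mx x)^t* *m (U *m conj_mx x) = x^t* *m x.
Proof.
have UtU : U^t* *m U = 1%:M by apply: mulmx1C; apply/unitarymxP.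
rewrite trmxC_mul trmxC_conj mulmxA -(mulmxA _ _ U) UtU mulmx1.
by rewrite -[LHS]mx11_trmx trmx_mul trmxK map_trmx.
Qed.

Lemma antisym_unitary_bessel (Y : 'M[C]_n) (x : 'cV[C]_n) : psdmx Y -> x != 0 ->
  mxform x Y x + mxform (U *m conj_mx x) Y (U *m conj_mx x) <= sqnorm x * \tr Y.
Proof.
move=> Ypsd xn0; apply: psdmx_orthogonal_pair; rewrite ?unitary_conj_sqnorm //.
- exact: sqnorm_gt0.
- exact: mx11_scalar.
- exact: mx11_scalar.
- exact: antisym_conj_orthogonal.
- exact: antisym_conj_orthogonalC.
Qed.

Lemma antisym_unitary_block_form_ge0 (X : 'M[C]_(n + n)) (x y : 'cV[C]_n) :
  psdmx X ->
  0 <= \tr (drsubmx X) * sqnorm x + \tr (ulsubmx X) * sqnorm y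
       - mxform x (ursubmx X + U *m (dlsubmx X)^T *m U^t*) y
       - mxform y (dlsubmx X + U *m (ursubmx X)^T *m U^t*) x.
Proof.
move=> Xpsd; set A := ulsubmx X; set B := ursubmx X.
set B' := dlsubmx X; set D := drsubmx X.
have Apsd : psdmx A := psdmx_ulsubmx Xpsd.
have Dpsd : psdmx D := psdmx_drsubmx Xpsd.
have trA_ge0 := psdmx_tr_ge0 Apsd; have trD_ge0 := psdmx_tr_ge0 Dpsd.
have [->|xn0] := eqVneq x 0.
  by rewrite sqnorm0 !(mxform0l, mxform0r) mulr0 add0r !subr0 mulr_ge0 ?sqnorm_ge0.
have [->|yn0] := eqVneq y 0.
  by rewrite sqnorm0 !(mxform0l, mxform0r) mulr0 addr0 !subr0 mulr_ge0 ?sqnorm_ge0.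
rewrite !mxformD !mxform_antisym_swap.
set x' := U *m conj_mx x; set y' := U *m conj_mx y.
set s := sqnorm x; set t := sqnorm y.
have s_gt0 : 0 < s := sqnorm_gt0 xn0; have t_gt0 : 0 < t := sqnorm_gt0 yn0.
have s_real : (- s)^* = - s by rewrite conj_Creal // rpredN gtr0_real.
have t_real : t^* = t by rewrite geC0_conj ?ltW.
have bessel_x := antisym_unitary_bessel Apsd xn0.
have bessel_y := antisym_unitary_bessel Dpsd yn0.
have comb := psdmx_col_mx_real_comb x y Xpsd t_real s_real.
have comb' := psdmx_col_mx_real_comb x' y' Xpsd t_real s_real.
move: comb comb'; rewrite -/A -/B -/B' -/D.
set c := (X in 0 <= X -> _); set c' := (X in 0 <= X -> _ <= _ ) => c_ge0 c'_ge0.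
rewrite -(pmulr_rge0 _ (mulr_gt0 s_gt0 t_gt0)).
have -> : s * t * (\tr D * s + \tr A * t - (mxform x B y + mxform y' B' x')
                   - (mxform y B' x + mxform x' B y'))
  = t ^+ 2 * (s * \tr A - (mxform x A x + mxform x' A x'))
    + s ^+ 2 * (t * \tr D - (mxform y D y + mxform y' D y')) + c + c'.
  by rewrite /c /c'; ring.
do 3![apply: addr_ge0 => //]; apply: mulr_ge0; rewrite ?subr_ge0 //.
all: by rewrite exprn_ge0 // ltW.
Qed.

End AntisymmetricUnitary.

Section PhiU.
Variables (C : numClosedFieldType) (N : nat) (U : 'M[C]_(2 * N)).

Lemma PhiU_hermitian (X : 'M[C]_(2 * N + 2 * N)) :
  X^t* = X -> (PhiU U X)^t* = PhiU U X.
Proof.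
move=> X_herm; have [A_herm D_herm B'E] := hermitian_submx X_herm.
have tr_real (Y : 'M[C]_(2 * N)) : Y^t* = Y -> (\tr Y)^* = \tr Y.
  by move=> Y_herm; rewrite -trace_map_mx -mxtrace_tr map_trmx Y_herm.
rewrite /PhiU linearZ map_mxZ /= fmorphV rmorph_nat tr_block_mx map_block_mx.
congr (_ *: block_mx _ _ _ _).
- by rewrite trmxC_scalar tr_real ?D_herm.
- rewrite !(linearN, map_mxN, linearD, map_mxD) /= !trmxC_mul B'E !trmxCK.
  by rewrite trmxK map_trmx trmxK mulmxA.
- rewrite !(linearN, map_mxN, linearD, map_mxD) /= !trmxC_mul B'E.
  by rewrite trmxK trmxCK map_mxCK !mulmxA.
- by rewrite trmxC_scalar tr_real ?A_herm.
Qed.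

Lemma mxform_PhiU (X : 'M[C]_(2 * N + 2 * N)) (x y : 'cV[C]_(2 * N)) :
  mxform (col_mx x y) (PhiU U X) (col_mx x y) =
  ((2 * N)%:R)^-1 * (\tr (drsubmx X) * sqnorm x + \tr (ulsubmx X) * sqnorm y
     - mxform x (ursubmx X + U *m (dlsubmx X)^T *m U^t*) y
     - mxform y (dlsubmx X + U *m (ursubmx X)^T *m U^t*) x).
Proof.
rewrite /PhiU mxformZ mxform_col_mx block_mxKul block_mxKur block_mxKdl.
by rewrite block_mxKdr !mxformN !mxform_scalar; congr (_ * _); ring.
Qed.

End PhiU.

Theorem proposition1 (C : numClosedFieldType) (N : nat) (hN : (1 <= N)%N)
  (U : 'M[C]_(2 * N)) (hU : U \is unitarymx) (hanti : U^T = - U)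
  (X : 'M[C]_(2 * N + 2 * N)) (hX : psdmx X) :
  psdmx (PhiU U X).
Proof.
split; first exact: PhiU_hermitian hX.1.
move=> v; rewrite -[v]vsubmxK -/(mxform _ _ _) mxform_PhiU.
by rewrite pmulr_rge0 ?invr_gt0 ?ltr0n ?muln_gt0 // antisym_unitary_block_form_ge0.
Qed.
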